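(* Let $T=(V,E)$ be a finite rooted tree, $\Pr$ a probability distribution over a finite set of queries, $u\in V$ and $v\in A(u)$ a proper ancestor of $u$. Then $$\mathbb{E}[I(u,v)]=\mathbb{E}[I(u,\emptyset)]-\mathbb{E}[I(v,\emptyset)].$$
   Context: $T=(V,E)$ is a finite rooted tree; $T(u)$ is the set of nodes of the subtree rooted at $u$; $A(u)$ the set of proper ancestors of $u$. Each non-leaf node is associated with a variable of a finite set $X$; $\mathrm{vars}(u)$ is the set of variables associated with nodes of $T(u)$. Each query $q$ determines $Z_q\subseteq X$. For $R\subseteq V$, $w\in V$: $I_q(w,R)=1$ iff $w\in R$, $\mathrm{vars}(w)\subseteq Z_q$, and no $x\in A(w)\cap R$ has $\mathrm{vars}(x)\subseteq Z_q$; else $0$; $\mathbb{E}[I(w,R)]=\sum_q\Pr(q)I_q(w,R)$. Notation: $\mathbb{E}[I(u,v)]:=\mathbb{E}[I(u,\{u,v\})]$ and $\mathbb{E}[I(w,\emptyset)]:=\mathbb{E}[I(w,\{w\})]$ (the expected usefulness of $w$ when it is the only selected node). *)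

From HB Require Import structures.
From mathcomp Require Import all_boot all_order all_algebra.
Set Implicit Arguments. Unset Strict Implicit. Unset Printing Implicit Defensive.
Import Order.TTheory GRing.Theory Num.Theory.
Local Open Scope ring_scope.

Section Tree.
Variables (V X Q : finType).
(* A rooted tree on V is given by a parent map: parent x = Some y iff y is the
   parent of x; the root has no parent. *)
Variable parent : V -> option V.

Definition parent_rel : rel V := fun a b => parent a == Some b.

(* T is a finite rooted tree with root r: r has no parent and every node
   reaches r by following parent links (hence acyclic, connected, unique root). *)
Definition is_rooted_tree (r : V) : Prop :=
  parent r = None /\ forall x, connect parent_rel x r.

Definition anc (u : V) : {set V} :=
  [set x | [exists y, (parent u == Some y) && connect parent_rel y x]].

Definition subtree (u : V) : {set V} := [set w | (w == u) || (u \in anc w)].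

Definition nonleaf (w : V) : bool := [exists c, parent c == Some w].

Definition vars (var : V -> X) (u : V) : {set X} :=
  [set var w | w in [set w in subtree u | nonleaf w]].

Definition Iq (var : V -> X) (Zq : {set X}) (w : V) (Rs : {set V}) : bool :=
  [&& w \in Rs, vars var w \subset Zq &
      [forall x in Rs, (x \in anc w) ==> ~~ (vars var x \subset Zq)]].

Definition EI (R : numDomainType) (var : V -> X) (Z : Q -> {set X}) (Pr : Q -> R)
    (w : V) (Rs : {set V}) : R :=
  \sum_(q : Q) Pr q * (Iq var (Z q) w Rs)%:R.
End Tree.

From HB Require Import structures.
From mathcomp Require Import all_boot all_order all_algebra.
Set Implicit Arguments. Unset Strict Implicit. Unset Printing Implicit Defensive.
Import Order.TTheory GRing.Theory Num.Theory.
Local Open Scope ring_scope.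

(* If v is a proper ancestor of u then T(u) ⊆ T(v), hence vars(u) ⊆ vars(v).
   For a query q, I_q(u,{u,v}) holds iff vars(u) ⊆ Z_q and vars(v) ⊄ Z_q, which
   by this inclusion is the difference of the indicators [vars(u) ⊆ Z_q] =
   I_q(u,{u}) and [vars(v) ⊆ Z_q] = I_q(v,{v}).  The identity thus holds query
   by query and for arbitrary weights Pr.  The only fact about trees needed is
   that no node is its own proper ancestor. *)

Section RootedTree.
Variables (V : finType) (parent : V -> option V).

Local Notation reach := (connect (parent_rel parent)).
Local Notation anc := (anc parent).

Lemma reach_parent x u :
  reach x u -> x != u -> exists2 z, parent x = Some z & reach z u.
Proof.
move=> /connectP [[|z p] pth ->]; first by rewrite eqxx.
move: pth => /= /andP [/eqP hz pz] _; exists z => //.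
by apply/connectP; exists p.
Qed.

(* Every node has at most one parent, so parent links starting on a cycle
   never leave it. *)
Lemma reach_cycle_closed x y z :
  parent x = Some y -> reach y x -> reach x z -> reach z x.
Proof.
move=> hx hyx /connectP [p pth ->] {z}.
have step w w' : parent_rel parent w w' -> reach w x -> reach w' x.
  move=> /eqP hw hwx; have [ewx | nwx] := eqVneq w x.
    by move: hw; rewrite ewx hx => -[<-].
  have [w'' hw'' hw''x] := reach_parent hwx nwx.
  by move: hw; rewrite hw'' => -[<-].
suff reach_last w q :
    reach w x -> path (parent_rel parent) w q -> reach (last w q) x.
  exact: reach_last (connect0 _ x) pth.
elim: q w => [|w' q IH] w //= hwx /andP [hw hq].
exact: IH (step _ _ hw hwx) hq.
Qed.

Lemma anc_trans w u v : u \in anc w -> v \in anc u -> v \in anc w.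
Proof.
rewrite !inE => /existsP [y /andP [hy hyu]] /existsP [y' /andP [hy' hy'v]].
apply/existsP; exists y; rewrite hy /=.
apply: connect_trans hyu _; apply: connect_trans hy'v.
by apply: connect1; rewrite /parent_rel hy'.
Qed.

Lemma in_subtree u w : (w \in subtree parent u) = (w == u) || (u \in anc w).
Proof. by rewrite /subtree in_set. Qed.

Lemma subtree_anc u v : v \in anc u -> subtree parent u \subset subtree parent v.
Proof.
move=> vu; apply/subsetP => w; rewrite !in_subtree => /orP [/eqP -> | uw].
  by rewrite vu orbT.
by rewrite (anc_trans uw vu) orbT.
Qed.

Variables (X : finType) (var : V -> X).

Lemma vars_anc u v : v \in anc u -> vars parent var u \subset vars parent var v.
Proof.
move=> vu; apply: imsetS; apply/subsetP => w /setIdP [uw nl].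
by apply/setIdP; split; first exact: subsetP (subtree_anc vu) w uw.
Qed.

Section Acyclic.
Variable root : V.
Hypothesis tree : is_rooted_tree parent root.

Lemma anc_irrefl u : u \notin anc u.
Proof.
case: tree => hroot hreach; apply/negP; rewrite inE.
move=> /existsP [y /andP [/eqP hu hyu]].
have hru : reach root u := reach_cycle_closed hu hyu (hreach u).
have [eru | nru] := eqVneq root u; first by move: hu; rewrite -eru hroot.
by have [z] := reach_parent hru nru; rewrite hroot.
Qed.

Lemma Iq_set1 Zq u : Iq parent var Zq u [set u] = (vars parent var u \subset Zq).
Proof.
rewrite /Iq set11 /=; apply: andb_idr => _.
by apply/forall_inP => x /set1P ->; rewrite (negbTE (anc_irrefl u)).
Qed.

Lemma Iq_set2_anc Zq u v : v \in anc u ->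
  Iq parent var Zq u [set u; v] =
    (vars parent var u \subset Zq) && ~~ (vars parent var v \subset Zq).
Proof.
move=> vu; rewrite /Iq in_set2 eqxx /=; congr (_ && _).
apply/forall_inP/idP => [hall | nv x].
  by have := hall v; rewrite in_set2 eqxx orbT vu; apply.
rewrite in_set2 => /orP [/eqP -> | /eqP ->]; last by rewrite nv implybT.
by rewrite (negbTE (anc_irrefl u)).
Qed.

End Acyclic.
End RootedTree.

Lemma natr_andbN (R : pzRingType) (a b : bool) :
  (b ==> a) -> (a && ~~ b)%:R = a%:R - b%:R :> R.
Proof. by case: a; case: b; rewrite ?subrr ?subr0. Qed.

Theorem lemma5 (V X Q : finType) (R : realFieldType)
    (parent : V -> option V) (root : V) (var : V -> X)
    (Z : Q -> {set X}) (Pr : Q -> R) :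
  is_rooted_tree parent root ->
  (forall q, 0 <= Pr q) -> \sum_(q : Q) Pr q = 1 ->
  forall u v : V, v \in anc parent u ->
  EI parent var Z Pr u [set u; v] =
    EI parent var Z Pr u [set u] - EI parent var Z Pr v [set v].
Proof.
move=> tree _ _ u v vu.
rewrite /EI -sumrB; apply: eq_bigr => q _.
rewrite -mulrBr (Iq_set2_anc _ tree _ vu) !(Iq_set1 _ tree) natr_andbN //.
by apply/implyP; apply: subset_trans (vars_anc var vu).
Qed.
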